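(* Let $f$ be a quadratic rational map with critical values $v_1,v_2$ satisfying $f(v_1)=f(v_2)=\beta$, $f(\beta)=\alpha$, $f(\alpha)=\alpha$, with $\alpha\neq\beta$. Then $$[v_1:v_2:\alpha:\beta]\in\{-1,\ 3+2\sqrt2,\ 3-2\sqrt2\}.$$
   Context: For four points $p,q,r,s\in\hat{\mathbb{C}}$ with $p,q,r$ distinct, the cross-ratio $[p:q:r:s]$ is defined as $z(s)$, where $z$ is the unique Möbius transformation with $z(p)=0$, $z(q)=\infty$, $z(r)=1$. *)

From HB Require Import structures.
From mathcomp Require Import all_boot all_order all_algebra.
From mathcomp Require Import complex.
From mathcomp Require Import Rstruct.
From Stdlib Require Import Reals.
Set Implicit Arguments. Unset Strict Implicit. Unset Printing Implicit Defensive.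
Import Order.TTheory GRing.Theory Num.Theory.
Local Open Scope ring_scope.

Definition CC : Type := (Rdefinitions.R)[i].

(* The Riemann sphere: [Some z] is the finite point z, [None] is infinity. *)
Definition sphere := option CC.

Definition quadratic_map (P Q : {poly CC}) : bool :=
  coprimep P Q && (maxn (size P) (size Q) == 3%N).

Definition rat_eval (P Q : {poly CC}) (z : sphere) : sphere :=
  match z with
  | Some x => if Q.[x] != 0 then Some (P.[x] / Q.[x]) else None
  | None => if Q`_2 != 0 then Some (P`_2 / Q`_2) else None
  end.

(* Criticality at a finite point x, in local charts: if x is not a pole,
   the derivative (P'Q - PQ')/Q^2 of P/Q vanishes at x; if x is a pole,
   the derivative of the chart expression 1/f = Q/P vanishes at x. *)
Definition crit_fin (P Q : {poly CC}) (x : CC) : bool :=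
  if Q.[x] != 0 then (P^`() * Q - P * Q^`()).[x] == 0
  else (Q^`() * P - Q * P^`()).[x] == 0.

(* Coefficient reversal at degree 2: the chart expression of f at infinity,
   w |-> f(1/w), is rev2 P / rev2 Q. *)
Definition rev2 (P : {poly CC}) : {poly CC} := \poly_(i < 3) P`_(2 - i).

Definition is_critical (P Q : {poly CC}) (z : sphere) : bool :=
  match z with
  | Some x => crit_fin P Q x
  | None => crit_fin (rev2 P) (rev2 Q) 0
  end.

Definition mobius (a b c d : CC) (z : sphere) : sphere :=
  match z with
  | Some x => if c * x + d != 0 then Some ((a * x + b) / (c * x + d)) else None
  | None => if c != 0 then Some (a / c) else None
  end.

(* [p:q:r:s] = w : the (unique) Moebius map m with m p = 0, m q = oo,
   m r = 1 sends s to w. Existence forces p, q, r distinct. *)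
Definition cross_ratio_is (p q r s w : sphere) : Prop :=
  exists a b c d : CC, a * d - b * c != 0 /\
    mobius a b c d p = Some 0 /\ mobius a b c d q = None /\
    mobius a b c d r = Some 1 /\ mobius a b c d s = w.

From HB Require Import structures.
From mathcomp Require Import all_boot all_order all_algebra.
From mathcomp Require Import complex.
From mathcomp Require Import Rstruct.
From mathcomp Require Import ring.
Set Implicit Arguments. Unset Strict Implicit. Unset Printing Implicit Defensive.
Import Order.TTheory GRing.Theory Num.Theory.
Local Open Scope ring_scope.

(* In homogeneous coordinates f = P/Q becomes the quadratic map
   u |-> (P(u), Q(u)) on pairs.  At two distinct critical points c1, c2 the
   polarization of this map vanishes (otherwise some nonzero s c1 + c2 would be
   a common zero of P and Q), so in the basis (c1, c2) the map reads
   s c1 + t c2 |-> s^2 V1 + t^2 V2 with V1, V2 the critical values, i.e. f is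
   z |-> z^2 followed by a Moebius map.  In these coordinates the four
   conditions f(v1) = f(v2) = beta, f(beta) = alpha, f(alpha) = alpha force
   v1, v2 and alpha, beta to be antipodal pairs (v1 = m, v2 = -m, alpha = z,
   beta = -z after scaling), and leave the relation
   (z^2 - 2 z m - m^2)(z^2 + m^2) = 0.  The cross ratio equals
   ((z + m)/(z - m))^2, which is -1 when z = +-i m and 3 +- 2 sqrt 2 when
   z = (1 +- sqrt 2) m. *)

Section Binary.
Variable F : fieldType.
Local Notation vec := (F * F)%type.

Definition det2 (u v : vec) : F := u.1 * v.2 - u.2 * v.1.
Definition nonzero2 (u : vec) : bool := (u.1 != 0) || (u.2 != 0).
Definition scale2 (k : F) (u : vec) : vec := (k * u.1, k * u.2).

Lemma det2xx (u : vec) : det2 u u = 0.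
Proof. by rewrite /det2 mulrC subrr. Qed.

Lemma det2C (u v : vec) : det2 u v = - det2 v u.
Proof. by rewrite /det2; ring. Qed.

Lemma det2_neq0_nonzerol (u v : vec) : det2 u v != 0 -> nonzero2 u.
Proof.
case: u => [u1 u2]; rewrite /det2 /nonzero2 /=.
by have [->|//] := eqVneq u1 0; have [->|//] := eqVneq u2 0; rewrite !mul0r subr0 eqxx.
Qed.

Lemma det2_neq0_nonzeror (u v : vec) : det2 u v != 0 -> nonzero2 v.
Proof. by rewrite det2C oppr_eq0; apply: det2_neq0_nonzerol. Qed.

Lemma det2_eq0_scale (a b : vec) :
  nonzero2 a -> det2 b a = 0 -> exists k, b = scale2 k a.
Proof.
case: a b => [a1 a2] [b1 b2]; rewrite /nonzero2 /det2 /scale2 /= => /orP[] nz e.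
  exists (b1 / a1); congr (_, _); first by rewrite divfK.
  by apply: (mulIf nz); rewrite mulrAC divfK // -[LHS]addr0 -e; ring.
exists (b2 / a2); congr (_, _); last by rewrite divfK.
by apply: (mulIf nz); rewrite mulrAC divfK // -[LHS]subr0 -e; ring.
Qed.

Lemma det2_eq0_trans (b u v : vec) :
  nonzero2 b -> det2 b u = 0 -> det2 b v = 0 -> det2 u v = 0.
Proof.
case: b u v => [b1 b2] [u1 u2] [v1 v2]; rewrite /nonzero2 /det2 /=.
move=> /orP[] nz hu hv; apply: (mulfI nz); rewrite mulr0.
  by transitivity (u1 * (b1 * v2 - b2 * v1) - v1 * (b1 * u2 - b2 * u1));
    [ring | rewrite hu hv !mulr0 subr0].
by transitivity (u2 * (b1 * v2 - b2 * v1) - v2 * (b1 * u2 - b2 * u1));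
  [ring | rewrite hu hv !mulr0 subr0].
Qed.

Lemma det2_eq0_basis (u v X : vec) :
  det2 u v != 0 -> det2 u X = 0 -> det2 v X = 0 -> X = (0, 0).
Proof.
case: u v X => [u1 u2] [v1 v2] [x1 x2]; rewrite /det2 /= => uv hu hv.
congr (_, _); apply: (mulIf uv); rewrite mul0r.
  by transitivity (v1 * (u1 * x2 - u2 * x1) - u1 * (v1 * x2 - v2 * x1));
    [ring | rewrite hu hv; ring].
by transitivity (v2 * (u1 * x2 - u2 * x1) - u2 * (v1 * x2 - v2 * x1));
  [ring | rewrite hu hv; ring].
Qed.

(* Coordinates of u in the basis (c1, c2), scaled by det2 c1 c2 (Cramer). *)
Definition coords (c1 c2 u : vec) : vec := (det2 u c2, det2 c1 u).

Lemma det2_coords (c1 c2 u v : vec) :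
  det2 (coords c1 c2 u) (coords c1 c2 v) = det2 c1 c2 * det2 u v.
Proof. by rewrite /coords /det2 /=; ring. Qed.

Definition cross2 (A B C E : vec) : F :=
  det2 E A * det2 C B / (det2 E B * det2 C A).

Lemma cross2_coords (c1 c2 A B C E : vec) : det2 c1 c2 != 0 ->
  cross2 (coords c1 c2 A) (coords c1 c2 B) (coords c1 c2 C) (coords c1 c2 E)
  = cross2 A B C E.
Proof.
move=> c12; have sq (k a b : F) : k * a * (k * b) = k ^+ 2 * (a * b) by ring.
rewrite /cross2 !det2_coords !sq invfM mulrACA mulfV ?expf_neq0 //.
by rewrite mul1r.
Qed.

Definition sqmap (V1 V2 u : vec) : vec :=
  (u.1 ^+ 2 * V1.1 + u.2 ^+ 2 * V2.1, u.1 ^+ 2 * V1.2 + u.2 ^+ 2 * V2.2).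

Lemma det2_sqmap (V1 V2 u v : vec) :
  det2 (sqmap V1 V2 u) (sqmap V1 V2 v)
  = det2 V1 V2 * det2 u v * (u.1 * v.2 + u.2 * v.1).
Proof. by rewrite /det2 /=; ring. Qed.

Lemma sqmap_antidiagonal (V1 V2 b u v : vec) :
  det2 V1 V2 != 0 -> det2 u v != 0 -> nonzero2 b ->
  det2 b (sqmap V1 V2 u) = 0 -> det2 b (sqmap V1 V2 v) = 0 ->
  u.1 * v.2 + u.2 * v.1 = 0.
Proof.
move=> V12 uv nb bu bv; have := det2_eq0_trans nb bu bv.
by rewrite det2_sqmap => /eqP; rewrite !mulf_eq0 (negbTE V12) (negbTE uv) => /eqP.
Qed.

Lemma antidiagonalP (x1 y1 x2 y2 : F) :
  x1 * y2 - y1 * x2 != 0 -> x1 * y2 + y1 * x2 = 0 ->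
  exists m, [/\ x1 = m * y1, x2 = - (m * y2), m != 0, y1 != 0 & y2 != 0].
Proof.
move=> hdet hsum.
have y1N0 : y1 != 0.
  apply: contraNneq hdet => y10; move: hsum; rewrite y10 !mul0r addr0 => /eqP.
  by rewrite mulf_eq0 => /orP[]/eqP->; rewrite !(mul0r, mulr0, subr0).
exists (x1 / y1); rewrite divfK //.
have x2E : x2 = - (x1 / y1 * y2).
  by apply: (mulfI y1N0); rewrite -[LHS]subr0 -hsum; field.
have hdet' : x1 * y2 - y1 * x2 = 2 * x1 * y2 by rewrite x2E; field.
move: hdet; rewrite hdet' !mulf_eq0 !negb_or => /andP[/andP[_ x1N0] y2N0].
by split=> //; rewrite ?mulf_eq0 ?negb_or x1N0 invr_eq0 y1N0.
Qed.

Section QuadraticMap.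
Variables P Q : {poly F}.

Definition hform (R : {poly F}) (u : vec) : F :=
  R`_0 * u.2 ^+ 2 + R`_1 * u.1 * u.2 + R`_2 * u.1 ^+ 2.

Definition hmap (u : vec) : vec := (hform P u, hform Q u).

Definition hpolar (u v : vec) : vec :=
  (2 * P`_0 * u.2 * v.2 + P`_1 * (u.1 * v.2 + u.2 * v.1) + 2 * P`_2 * u.1 * v.1,
   2 * Q`_0 * u.2 * v.2 + Q`_1 * (u.1 * v.2 + u.2 * v.1) + 2 * Q`_2 * u.1 * v.1).

(* [hwronskian (x, 1)] is [(P^`() * Q - P * Q^`()).[x]]. *)
Definition hwronskian (u : vec) : F :=
  (P`_2 * Q`_1 - P`_1 * Q`_2) * u.1 ^+ 2
  + 2 * (P`_2 * Q`_0 - P`_0 * Q`_2) * u.1 * u.2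
  + (P`_1 * Q`_0 - P`_0 * Q`_1) * u.2 ^+ 2.

Lemma hpolarC (u v : vec) : hpolar u v = hpolar v u.
Proof. by rewrite /hpolar; congr (_, _); ring. Qed.

Lemma hmapZ (k : F) (u : vec) : hmap (scale2 k u) = scale2 (k ^+ 2) (hmap u).
Proof. by rewrite /hmap /hform /scale2 /=; congr (_, _); ring. Qed.

Lemma hmap_lin2 (c1 c2 : vec) (s t : F) :
  hmap (s * c1.1 + t * c2.1, s * c1.2 + t * c2.2) =
  (s ^+ 2 * (hmap c1).1 + t ^+ 2 * (hmap c2).1 + s * t * (hpolar c1 c2).1,
   s ^+ 2 * (hmap c1).2 + t ^+ 2 * (hmap c2).2 + s * t * (hpolar c1 c2).2).
Proof. by rewrite /hmap /hform /hpolar /=; congr (_, _); ring. Qed.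

Lemma det2_hmap_hpolar (u v : vec) :
  det2 (hmap u) (hpolar u v) = hwronskian u * det2 u v.
Proof. by rewrite /det2 /hmap /hform /hpolar /hwronskian /=; ring. Qed.

Lemma det2_hmap_coords (c1 c2 b W : vec) :
  det2 c1 c2 ^+ 3 * det2 b (hmap W) =
  det2 (coords c1 c2 b)
       (sqmap (coords c1 c2 (hmap c1)) (coords c1 c2 (hmap c2)) (coords c1 c2 W))
  + det2 c1 c2 * det2 W c2 * det2 c1 W * det2 b (hpolar c1 c2).
Proof. by rewrite /coords /sqmap /det2 /hmap /hform /hpolar /=; ring. Qed.

Lemma det2_sqmap_coords (c1 c2 b W : vec) :
  hpolar c1 c2 = (0, 0) -> det2 b (hmap W) = 0 ->
  det2 (coords c1 c2 b)
       (sqmap (coords c1 c2 (hmap c1)) (coords c1 c2 (hmap c2)) (coords c1 c2 W)) = 0.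
Proof.
move=> pol0 bW; have := det2_hmap_coords c1 c2 b W.
have b0 : det2 b (0, 0) = 0 by rewrite /det2 /= !mulr0 subrr.
by rewrite bW pol0 b0 !mulr0 addr0.
Qed.

Lemma det2_hmap_proportional (b u V : vec) : nonzero2 u -> nonzero2 V ->
  det2 u V = 0 -> det2 b (hmap u) = 0 -> det2 b (hmap V) = 0.
Proof.
move=> nu nV /(det2_eq0_scale nV)[k uE]; rewrite uE hmapZ.
have kN0 : k != 0 by apply: contraTneq nu => k0; rewrite uE k0 /nonzero2 /= !mul0r eqxx.
rewrite /det2 /scale2 /= => /eqP.
by rewrite -mulrCA -[X in _ - X]mulrCA -mulrBr mulf_eq0 expf_eq0 (negbTE kN0) => /eqP.
Qed.

Lemma poly_deg2E (R : {poly F}) : (size R <= 3)%N ->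
  R = (R`_0)%:P + (R`_1)%:P * 'X + (R`_2)%:P * 'X^2.
Proof.
move=> sR; apply/polyP => i.
rewrite !coefD !coefCM !coefC coefX coefXn.
case: i => [|[|[|i]]] /=; rewrite ?mulr0 ?mulr1 ?addr0 ?add0r //.
by rewrite nth_default // (leq_trans sR).
Qed.

Lemma hform_horner (R : {poly F}) (x : F) :
  (size R <= 3)%N -> hform R (x, 1) = R.[x].
Proof. by move=> sR; rewrite [in RHS](poly_deg2E sR) !hornerE /hform /=; ring. Qed.

Hypothesis coPQ : coprimep P Q.
Hypothesis sizePQ : maxn (size P) (size Q) = 3%N.

Lemma size_le3l : (size P <= 3)%N.
Proof. by rewrite -sizePQ leq_maxl. Qed.

Lemma size_le3r : (size Q <= 3)%N.
Proof. by rewrite -sizePQ leq_maxr. Qed.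

Lemma hmap_nonzero (u : vec) : nonzero2 u -> nonzero2 (hmap u).
Proof.
case: u => x y; rewrite /nonzero2 /hmap /=.
have [-> {y}|yN0 _] := eqVneq y 0.
  rewrite /= orbF => xN0.
  have eR (R : {poly F}) : hform R (x, 0) = R`_2 * x ^+ 2 by rewrite /hform /=; ring.
  have lead2 (R : {poly F}) : size R = 3%N -> R`_2 != 0.
    move=> sR; rewrite -[R`_2]/(R`_(3.-1)) -sR -lead_coefE.
    by rewrite lead_coef_eq0 -size_poly_eq0 sR.
  rewrite !eR; have [/lead2 P2|sPN3] := eqVneq (size P) 3%N.
    by rewrite mulf_neq0 ?expf_neq0.
  have sQ : size Q = 3%N.
    by move: sizePQ; rewrite /maxn; case: ltnP => // _ sP3; rewrite sP3 eqxx in sPN3.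
  by apply/orP; right; rewrite mulf_neq0 ?expf_neq0 ?lead2.
have hformE (R : {poly F}) : (size R <= 3)%N -> hform R (x, y) = y ^+ 2 * R.[x / y].
  by move=> sR; rewrite -hform_horner // /hform /=; field.
rewrite !hformE ?size_le3l ?size_le3r //.
have [P0|PN0] := eqVneq P.[x / y] 0; last by rewrite mulf_neq0 ?expf_neq0.
have Qx := coprimep_root coPQ (introT eqP P0 : root P (x / y)).
by apply/orP; right; rewrite mulf_neq0 ?expf_neq0.
Qed.

End QuadraticMap.

End Binary.

Lemma hmap_critical_independent (F : closedFieldType) (P Q : {poly F}) (c1 c2 : F * F) :
  coprimep P Q -> maxn (size P) (size Q) = 3%N -> det2 c1 c2 != 0 ->
  hwronskian P Q c1 = 0 -> det2 (hmap P Q c1) (hmap P Q c2) != 0.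
Proof.
move=> coPQ sPQ c12 w1; apply/eqP => V12.
have nV1 := hmap_nonzero coPQ sPQ (det2_neq0_nonzerol c12).
have [mu V2E] : exists mu, hmap P Q c2 = scale2 mu (hmap P Q c1).
  by apply: det2_eq0_scale nV1 _; rewrite det2C V12 oppr0.
have [la polE] : exists la, hpolar P Q c1 c2 = scale2 la (hmap P Q c1).
  by apply: det2_eq0_scale nV1 _; rewrite det2C det2_hmap_hpolar w1 mul0r oppr0.
(* a root s of s^2 + la s + mu makes hmap vanish at s c1 + c2 *)
have [s sE] := @solve_monicpoly F 2 (fun i => if i == 0%N then - mu else - la) isT.
have root_s : s ^+ 2 + la * s + mu = 0.
  by move: sE; rewrite !big_ord_recr big_ord0 /= => ->; ring.
have nsc : nonzero2 (s * c1.1 + 1 * c2.1, s * c1.2 + 1 * c2.2).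
  apply: (@det2_neq0_nonzeror _ c1); apply: contraNneq c12 => h.
  by apply/eqP; rewrite -h /det2 /=; ring.
have := hmap_nonzero coPQ sPQ nsc.
rewrite hmap_lin2 V2E polE /scale2 /nonzero2 /=.
have lin (x : F) : s ^+ 2 * x + 1 ^+ 2 * (mu * x) + s * 1 * (la * x)
                   = (s ^+ 2 + la * s + mu) * x by ring.
by rewrite !lin root_s !mul0r eqxx.
Qed.

Lemma hpolar_critical_eq0 (F : fieldType) (P Q : {poly F}) (c1 c2 : F * F) :
  det2 (hmap P Q c1) (hmap P Q c2) != 0 ->
  hwronskian P Q c1 = 0 -> hwronskian P Q c2 = 0 -> hpolar P Q c1 c2 = (0, 0).
Proof.
move=> V12 w1 w2; apply: det2_eq0_basis V12 _ _.
  by rewrite det2_hmap_hpolar w1 mul0r.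
by rewrite hpolarC det2_hmap_hpolar w2 mul0r.
Qed.

Section CrossRatioCubic.
Variable F : numFieldType.

Lemma cubic_of_antipodal (z m y1 y2 : F) :
  y1 != 0 -> y2 != 0 -> m != 0 ->
  m ^+ 2 * y1 * (z + m) + y2 * (z - m) = 0 ->
  z ^+ 2 * y1 * (z - m) + y2 * (z + m) = 0 ->
  [/\ z - m != 0, z + m != 0 &
      let w := (z + m) ^+ 2 / (z - m) ^+ 2 in (w + 1) * (w ^+ 2 - 6 * w + 1) = 0].
Proof.
move=> y1N0 y2N0 mN0 E1 E2.
have two_N0 : (2 : F) != 0 by rewrite pnatr_eq0.
have key : (z ^+ 2 - 2 * z * m - m ^+ 2) * (z ^+ 2 + m ^+ 2) = 0.
  apply: (mulfI y1N0); rewrite mulr0.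
  transitivity ((z ^+ 2 * y1 * (z - m) + y2 * (z + m)) * (z - m)
                - (m ^+ 2 * y1 * (z + m) + y2 * (z - m)) * (z + m)); first ring.
  by rewrite E1 E2 !mul0r subr0.
have zmN0 : z - m != 0.
  apply: contra_eqN (E1) => /eqP zm; have -> : z = m by apply/eqP; rewrite -subr_eq0 zm.
  rewrite subrr mulr0 addr0 (_ : _ * _ = 2 * m ^+ 3 * y1); last by ring.
  by rewrite !mulf_neq0 ?expf_neq0.
have zpN0 : z + m != 0.
  apply: contra_eqN (E1) => /eqP zp; have -> : z = - m by apply/eqP; rewrite -addr_eq0 zp.
  rewrite addNr mulr0 add0r (_ : _ * _ = - (2 * m * y2)); last by ring.
  by rewrite oppr_eq0 !mulf_neq0.
split=> // w.
suff -> : (w + 1) * (w ^+ 2 - 6 * w + 1) = -8 * ((z ^+ 2 - 2 * z * m - m ^+ 2) *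
    (z ^+ 2 + m ^+ 2)) * (z ^+ 2 + 2 * z * m - m ^+ 2) / (z - m) ^+ 6.
  by rewrite key mulr0 !mul0r.
by rewrite /w; field.
Qed.

Lemma sqmap_cross2_cubic (V1 V2 A B : F * F) :
  det2 V1 V2 != 0 -> det2 A B != 0 ->
  det2 B (sqmap V1 V2 V1) = 0 -> det2 B (sqmap V1 V2 V2) = 0 ->
  det2 A (sqmap V1 V2 B) = 0 -> det2 A (sqmap V1 V2 A) = 0 ->
  [/\ det2 A V1 != 0, det2 A V2 != 0, det2 B V2 != 0 &
      let w := cross2 V1 V2 A B in (w + 1) * (w ^+ 2 - 6 * w + 1) = 0].
Proof.
move=> V12 AB h1 h2 h3 h4.
have sV := sqmap_antidiagonal V12 V12 (det2_neq0_nonzeror AB) h1 h2.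
have sA := sqmap_antidiagonal V12 AB (det2_neq0_nonzerol AB) h4 h3.
clear h2 h3; move: V1 V2 A B V12 AB h1 h4 sV sA => [x1 y1] [x2 y2] [sa ta] [sb tb] /=.
move=> V12 AB h1 h4 sV sA; rewrite /det2 /= in V12 AB h1 h4.
have [m [x1E x2E mN0 y1N0 y2N0]] := antidiagonalP V12 sV.
have [z [saE sbE _ taN0 tbN0]] := antidiagonalP AB sA.
subst x1 x2 sa sb.
have E1 : m ^+ 2 * y1 * (z + m) + y2 * (z - m) = 0.
  have : - (tb * y1 ^+ 2) * (m ^+ 2 * y1 * (z + m) + y2 * (z - m)) = 0.
    by rewrite -h1; ring.
  by move/eqP; rewrite mulf_eq0 oppr_eq0 mulf_eq0 expf_eq0 (negbTE tbN0) (negbTE y1N0) => /eqP.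
have E2 : z ^+ 2 * y1 * (z - m) + y2 * (z + m) = 0.
  have : ta ^+ 3 * (z ^+ 2 * y1 * (z - m) + y2 * (z + m)) = 0 by rewrite -h4; ring.
  by move/eqP; rewrite mulf_eq0 expf_eq0 (negbTE taN0) => /eqP.
have [zmN0 zpN0 cubic] := cubic_of_antipodal y1N0 y2N0 mN0 E1 E2.
have dA1 : det2 (z * ta, ta) (m * y1, y1) = ta * y1 * (z - m) by rewrite /det2 /=; ring.
have dA2 : det2 (z * ta, ta) (- (m * y2), y2) = ta * y2 * (z + m) by rewrite /det2 /=; ring.
have dB1 : det2 (- (z * tb), tb) (m * y1, y1) = - (tb * y1 * (z + m)).
  by rewrite /det2 /=; ring.
have dB2 : det2 (- (z * tb), tb) (- (m * y2), y2) = - (tb * y2 * (z - m)).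
  by rewrite /det2 /=; ring.
rewrite dA1 dA2 dB2 oppr_eq0 !mulf_neq0 //; split => //.
suff -> : cross2 (m * y1, y1) (- (m * y2), y2) (z * ta, ta) (- (z * tb), tb)
          = (z + m) ^+ 2 / (z - m) ^+ 2 by [].
by rewrite /cross2 dA1 dA2 dB1 dB2; field; rewrite zmN0 y1N0 taN0 y2N0 tbN0.
Qed.

End CrossRatioCubic.

Lemma cubic_roots_sqrt2 (w : CC) : (w + 1) * (w ^+ 2 - 6 * w + 1) = 0 ->
  w = - 1 \/ w = ((3 + 2 * Num.sqrt (2 : Rdefinitions.R))%:C%C) \/
  w = ((3 - 2 * Num.sqrt (2 : Rdefinitions.R))%:C%C).
Proof.
set s := (Num.sqrt (2 : Rdefinitions.R))%:C%C.
have s2 : s ^+ 2 = 2 by rewrite /s -rmorphXn sqr_sqrtr ?ler0n // rmorph_nat.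
have -> : (3 + 2 * Num.sqrt (2 : Rdefinitions.R))%:C%C = 3 + 2 * s.
  by rewrite rmorphD rmorphM !rmorph_nat.
have -> : (3 - 2 * Num.sqrt (2 : Rdefinitions.R))%:C%C = 3 - 2 * s.
  by rewrite rmorphB rmorphM !rmorph_nat.
have -> : w ^+ 2 - 6 * w + 1 = (w - (3 + 2 * s)) * (w - (3 - 2 * s)).
  by apply/eqP; rewrite -subr_eq0; apply/eqP;
    transitivity (4 * (s ^+ 2 - 2)); [ring | rewrite s2 subrr mulr0].
move/eqP; rewrite !mulf_eq0 => /orP[|/orP[]] /eqP h.
- by left; apply/eqP; rewrite -addr_eq0 h.
- by right; left; apply/eqP; rewrite -subr_eq0 h.
- by right; right; apply/eqP; rewrite -subr_eq0 h.
Qed.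

Definition homog (z : sphere) : CC * CC :=
  match z with Some x => (x, 1) | None => (1, 0) end.

Lemma homog_nonzero (z : sphere) : nonzero2 (homog z).
Proof. by case: z => [x|]; rewrite /nonzero2 /= oner_neq0 ?orbT. Qed.

Lemma homog_inj (z z' : sphere) : det2 (homog z) (homog z') = 0 -> z = z'.
Proof.
case: z z' => [x|] [y|]; rewrite /det2 /= ?(mulr1, mul1r, mulr0, mul0r, subr0, sub0r) //.
- by move/eqP; rewrite subr_eq0 => /eqP ->.
- by move/eqP; rewrite oppr_eq0 oner_eq0.
- by move/eqP; rewrite oner_eq0.
Qed.

Lemma rat_eval_homog (P Q : {poly CC}) (z : sphere) :
  (size P <= 3)%N -> (size Q <= 3)%N ->
  det2 (homog (rat_eval P Q z)) (hmap P Q (homog z)) = 0.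
Proof.
move=> sP sQ; case: z => [x|] /=; rewrite /hmap ?hform_horner //.
  by case: ifP => [QN0|/negbFE/eqP Q0]; rewrite /det2 /= ?divfK ?Q0 //; ring.
rewrite /hform /=; case: ifP => [Q2N0|/negbFE/eqP Q2]; rewrite /det2 /=.
  by field.
by rewrite Q2; ring.
Qed.

Lemma critical_hwronskian (P Q : {poly CC}) (z : sphere) :
  (size P <= 3)%N -> (size Q <= 3)%N ->
  is_critical P Q z -> hwronskian P Q (homog z) = 0.
Proof.
move=> sP sQ; have hornerD (R : {poly CC}) x : (size R <= 3)%N ->
    (R^`()).[x] = R`_1 + 2 * R`_2 * x.
  by move=> sR; rewrite [in LHS](poly_deg2E sR) !derivE !hornerE; ring.
case: z => [x|] /=; rewrite /crit_fin.
  case: ifP => _ /eqP; rewrite !hornerE !hornerD // -!hform_horner //.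
  - by rewrite /hform /hwronskian /= => h; rewrite -[RHS]h; ring.
  - rewrite /hform /hwronskian /= => h.
    by apply: oppr_inj; rewrite oppr0 -[RHS]h; ring.
rewrite /rev2; case: ifP => _ /eqP;
  rewrite !hornerE !horner_coef0 !coef_deriv !coef_poly /hwronskian /= => h.
- by apply: oppr_inj; rewrite oppr0 -[RHS]h; ring.
- by rewrite -[RHS]h; ring.
Qed.

Lemma mobius_homogE (a b c d : CC) (z : sphere) :
  mobius a b c d z = let u := homog z in
    if c * u.1 + d * u.2 != 0 then Some ((a * u.1 + b * u.2) / (c * u.1 + d * u.2))
    else None.
Proof. by case: z => [x|] /=; rewrite ?(mulr1, mulr0, addr0). Qed.

Lemma mobius_proportional (a b c d : CC) (z : sphere) (X : CC * CC) :
  nonzero2 X -> det2 (homog z) X = 0 ->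
  mobius a b c d z =
    if c * X.1 + d * X.2 != 0 then Some ((a * X.1 + b * X.2) / (c * X.1 + d * X.2))
    else None.
Proof.
move=> nX /(det2_eq0_scale nX)[k zE].
have kN0 : k != 0.
  by apply: contraTneq (homog_nonzero z) => k0; rewrite zE k0 /nonzero2 /= !mul0r eqxx.
rewrite mobius_homogE zE /scale2 /=.
have lin (e f : CC) : e * (k * X.1) + f * (k * X.2) = k * (e * X.1 + f * X.2) by ring.
rewrite !lin mulf_eq0 (negbTE kN0) /=; case: ifP => // nd.
by congr Some; field; rewrite kN0 nd.
Qed.

Lemma cross_ratio_is_cross2 (p q r s : sphere) (A B C E : CC * CC) :
  nonzero2 A -> nonzero2 B -> nonzero2 C -> nonzero2 E ->
  det2 (homog p) A = 0 -> det2 (homog q) B = 0 ->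
  det2 (homog r) C = 0 -> det2 (homog s) E = 0 ->
  det2 A B != 0 -> det2 C A != 0 -> det2 C B != 0 -> det2 E B != 0 ->
  cross_ratio_is p q r s (Some (cross2 A B C E)).
Proof.
move=> nA nB nC nE pA qB rC sE AB CA CB EB.
exists (A.2 * det2 C B), (- A.1 * det2 C B), (B.2 * det2 C A), (- B.1 * det2 C A).
set m := mobius _ _ _ _.
(* homogeneously, m sends X to (det2 X A * det2 C B, det2 X B * det2 C A) *)
have mE (z : sphere) X : nonzero2 X -> det2 (homog z) X = 0 ->
    m z = if det2 X B != 0 then Some (det2 X A * det2 C B / (det2 X B * det2 C A))
          else None.
  move=> nX zX; rewrite /m (mobius_proportional _ _ _ _ nX zX).
  have -> : B.2 * det2 C A * X.1 + - B.1 * det2 C A * X.2 = det2 X B * det2 C A.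
    by rewrite /det2; ring.
  have -> : A.2 * det2 C B * X.1 + - A.1 * det2 C B * X.2 = det2 X A * det2 C B.
    by rewrite /det2; ring.
  by rewrite mulf_eq0 negb_or CA andbT.
split.
  rewrite (_ : _ - _ = det2 A B * det2 C A * det2 C B); first by rewrite !mulf_neq0.
  by rewrite /det2; ring.
rewrite (mE _ _ nA pA) (mE _ _ nB qB) (mE _ _ nC rC) (mE _ _ nE sE) AB CB EB.
rewrite !det2xx eqxx !mul0r; split => //; split => //; split => //.
by congr Some; rewrite [det2 C A * _]mulrC divff ?mulf_neq0.
Qed.

Theorem mainTheorem18 (P Q : {poly CC}) (c1 c2 v1 v2 alpha beta : sphere) :
  quadratic_map P Q ->
  is_critical P Q c1 -> is_critical P Q c2 -> c1 <> c2 ->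
  rat_eval P Q c1 = v1 -> rat_eval P Q c2 = v2 ->
  rat_eval P Q v1 = beta -> rat_eval P Q v2 = beta ->
  rat_eval P Q beta = alpha -> rat_eval P Q alpha = alpha ->
  alpha <> beta ->
  exists w : sphere, cross_ratio_is v1 v2 alpha beta w /\
    (w = Some (- 1) \/
     w = Some ((3 + 2 * Num.sqrt (2 : Rdefinitions.R))%:C%C) \/
     w = Some ((3 - 2 * Num.sqrt (2 : Rdefinitions.R))%:C%C)).
Proof.
move=> /andP[coPQ /eqP sPQ] cr1 cr2 c12 ev1 ev2 ev1b ev2b evb eva ab.
have sP := size_le3l sPQ; have sQ := size_le3r sPQ.
have homog_eval z z' : rat_eval P Q z = z' -> det2 (homog z') (hmap P Q (homog z)) = 0.
  by move=> <-; apply: rat_eval_homog.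
have C12 : det2 (homog c1) (homog c2) != 0 by apply/eqP => /homog_inj.
have AB : det2 (homog alpha) (homog beta) != 0 by apply/eqP => /homog_inj.
have w1 := critical_hwronskian sP sQ cr1; have w2 := critical_hwronskian sP sQ cr2.
have V12 := hmap_critical_independent coPQ sPQ C12 w1.
have pol0 := hpolar_critical_eq0 V12 w1 w2.
have nV1 := det2_neq0_nonzerol V12; have nV2 := det2_neq0_nonzeror V12.
have hb1 := det2_hmap_proportional (homog_nonzero v1) nV1 (homog_eval _ _ ev1)
  (homog_eval _ _ ev1b).
have hb2 := det2_hmap_proportional (homog_nonzero v2) nV2 (homog_eval _ _ ev2)
  (homog_eval _ _ ev2b).
pose co := coords (homog c1) (homog c2).
have co_neq0 u v : det2 u v != 0 -> det2 (co u) (co v) != 0.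
  by move=> uv; rewrite det2_coords mulf_neq0.
have [AV1 AV2 BV2 cubic] := sqmap_cross2_cubic (co_neq0 _ _ V12) (co_neq0 _ _ AB)
  (det2_sqmap_coords pol0 hb1) (det2_sqmap_coords pol0 hb2)
  (det2_sqmap_coords pol0 (homog_eval _ _ evb)) (det2_sqmap_coords pol0 (homog_eval _ _ eva)).
rewrite !det2_coords !mulf_eq0 !negb_or C12 /= in AV1 AV2 BV2.
rewrite /= cross2_coords // in cubic.
exists (Some (cross2 (hmap P Q (homog c1)) (hmap P Q (homog c2)) (homog alpha) (homog beta))).
split; last by case: (cubic_roots_sqrt2 cubic) => [->|[->|->]]; auto.
by apply: cross_ratio_is_cross2; rewrite ?homog_nonzero ?det2xx //; apply: homog_eval.
Qed.
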